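(* For every (closed) term $P$ and every event $e \in \Sigma$, $$[\![P]\!](e) = \bigcup_{Q \,:\, P \overset{e}{\Rightarrow} Q} [\![Q]\!].$$
   Context: Fix a set $\Sigma$ of events. Terms: $P, Q ::= \mathit{STOP} \mid \mathit{FAIL} \mid ?x{:}E \rightarrow P \mid P \,\Box\, Q \mid P \parallel_E Q$, where an event set $E$ is $f(y_1,\dots,y_n)$ with $f : \Sigma^n \to 2^\Sigma$ computable and each $y_i$ an event variable or event; $x$ is bound in $P$ in $?x{:}E\rightarrow P$. Terms are closed, so each $E$ denotes a subset of $\Sigma$; $[e/x]P$ is substitution of event $e$ for $x$. Trace semantics. A trace set is a prefix-closed subset of $\Sigma^*$ (possibly empty); $\varepsilon$ is the empty trace. For a trace set $T$: $eT := \{\varepsilon\} \cup \{et \mid t \in T\}$, $T(e) := \{t \mid et \in T\}$. For $E \subseteq \Sigma$, $\parallel_E$ on trace sets is the unique function with $\varnothing \parallel_E T = T \parallel_E \varnothing = \varnothing$ and, for nonempty $T_1, T_2$, $T_1 \parallel_E T_2 = \bigcup_{e \in E} e(T_1(e) \parallel_E T_2(e)) \cup \bigcup_{e \in \Sigma\setminus E}( e(T_1(e) \parallel_E T_2) \cup e(T_1 \parallel_E T_2(e)))$. The semantics: $[\![\mathit{STOP}]\!] = \{\varepsilon\}$, $[\![\mathit{FAIL}]\!] = \varnothing$, $[\![?x{:}E \rightarrow P]\!] = \{\varepsilon\} \cup \bigcup_{e \in E} e[\![ [e/x]P ]\!]$, $[\![P \Box Q]\!] = [\![P]\!] \cup [\![Q]\!]$,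 $[\![P \parallel_E Q]\!] = [\![P]\!] \parallel_E [\![Q]\!]$. Operational semantics. Actions $a ::= e \mid \tau$, $\tau \notin \Sigma$. Doomed terms: $D ::= \mathit{FAIL} \mid D \Box D \mid D \parallel_E P \mid P \parallel_E D$; viable terms $\hat P, \hat Q$ are non-doomed terms. The internal transition relation $\xrightarrow{a}$ is the least relation closed under: (1) $e \in E \Rightarrow (?x{:}E \rightarrow P) \xrightarrow{e} [e/x]P$; (2) $P \xrightarrow{\tau} P' \Rightarrow P \Box Q \xrightarrow{\tau} P' \Box Q$; (3) $Q \xrightarrow{\tau} Q' \Rightarrow P \Box Q \xrightarrow{\tau} P \Box Q'$; (4) $P \xrightarrow{e} P' \Rightarrow P \Box Q \xrightarrow{e} P'$; (5) $Q \xrightarrow{e} Q' \Rightarrow P \Box Q \xrightarrow{e} Q'$; (6) $P \xrightarrow{a} P'$, $a \notin E$, $\hat Q$ viable $\Rightarrow P \parallel_E \hat Q \xrightarrow{a} P' \parallel_E \hat Q$; (7) $Q \xrightarrow{a} Q'$, $a \notin E$, $\hat P$ viable $\Rightarrow \hat P \parallel_E Q \xrightarrow{a} \hat P \parallel_E Q'$; (8) $\hat P, \hat Q$ viable, $\hat P \xrightarrow{e} P'$, $\hat Q \xrightarrow{e} Q'$, $e \in E$ $\Rightarrow \hat P \parallel_E \hat Q \xrightarrow{e} P' \parallel_E Q'$; (9) $D_1, D_2$ doomed, $D_1 \xrightarrow{\tau} P_1 \Rightarrow D_1 \parallel_E D_2 \xrightarrow{\tau} P_1 \parallel_E D_2$;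 (10) $D_1, D_2$ doomed, $D_2 \xrightarrow{\tau} P_2 \Rightarrow D_1 \parallel_E D_2 \xrightarrow{\tau} D_1 \parallel_E P_2$; (11) $\mathit{FAIL} \Box \mathit{FAIL} \xrightarrow{\tau} \mathit{FAIL}$; (12) $\mathit{FAIL} \parallel_E P \xrightarrow{\tau} \mathit{FAIL}$; (13) $P \parallel_E \mathit{FAIL} \xrightarrow{\tau} \mathit{FAIL}$. For $s \in \Sigma^*$, the visible transition $P \overset{s}{\Rightarrow} Q$ holds iff there is a finite sequence (possibly of length zero) of internal transitions $P = P_0 \xrightarrow{a_1} P_1 \cdots \xrightarrow{a_n} P_n = Q$ such that deleting all $\tau$'s from $a_1 \cdots a_n$ yields $s$; in particular $P \overset{e}{\Rightarrow} Q$ means such a sequence whose only non-$\tau$ label is a single occurrence of $e$. *)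

From Stdlib Require Import List Arith.
Import ListNotations.
Set Implicit Arguments.

Section Calculus.
Variable Sigma : Type.

Inductive atom : Type :=
| AVar (x : nat)
| AEv (e : Sigma).

(* event set  f(y_1,...,y_n);  f : Sigma^n -> 2^Sigma is given as a
   (boolean, i.e. decidable) function on the list of its n arguments *)
Inductive eset : Type :=
| ESet (f : list Sigma -> Sigma -> bool) (ys : list atom).

Inductive term : Type :=
| STOP
| FAIL
| Pre (x : nat) (E : eset) (P : term)      (* ?x:E -> P, x bound in P *)
| Ext (P Q : term)
| Par (E : eset) (P Q : term).

Definition closed_atom (bs : list nat) (a : atom) : Prop :=
  match a with AVar x => In x bs | AEv _ => True end.
Definition closed_eset (bs : list nat) (E : eset) : Prop :=
  match E with ESet _ ys => Forall (closed_atom bs) ys end.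
Fixpoint closed_under (bs : list nat) (P : term) : Prop :=
  match P with
  | STOP | FAIL => True
  | Pre x E P => closed_eset bs E /\ closed_under (x :: bs) P
  | Ext P Q => closed_under bs P /\ closed_under bs Q
  | Par E P Q => closed_eset bs E /\ closed_under bs P /\ closed_under bs Q
  end.
Definition closed (P : term) : Prop := closed_under [] P.

Definition subst_atom (e : Sigma) (x : nat) (a : atom) : atom :=
  match a with AVar y => if Nat.eqb x y then AEv e else AVar y | AEv d => AEv d end.
Definition subst_eset (e : Sigma) (x : nat) (E : eset) : eset :=
  match E with ESet f ys => ESet f (map (subst_atom e x) ys) end.
Fixpoint subst (e : Sigma) (x : nat) (P : term) : term :=
  match P with
  | STOP => STOP
  | FAIL => FAIL
  | Pre y E P => Pre y (subst_eset e x E) (if Nat.eqb x y then P else subst e x P)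
  | Ext P Q => Ext (subst e x P) (subst e x Q)
  | Par E P Q => Par (subst_eset e x E) (subst e x P) (subst e x Q)
  end.

(* denotation of a closed event set: e \in f(v_1,...,v_n) *)
Definition inE (E : eset) (e : Sigma) : Prop :=
  match E with ESet f ys => exists vs, ys = map AEv vs /\ f vs e = true end.

Definition tset := list Sigma -> Prop.
Definition deriv (T : tset) (e : Sigma) : tset := fun t => T (e :: t).
Definition nonempty (T : tset) : Prop := exists s, T s.

(* membership in T1 ||_E T2, by recursion on the trace, following the
   defining equations literally *)
Fixpoint par_mem (E : eset) (t : list Sigma) (T1 T2 : tset) : Prop :=
  match t with
  | [] => nonempty T1 /\ nonempty T2 /\ inhabited Sigma
  | e :: t' => nonempty T1 /\ nonempty T2 /\
      ((inE E e /\ par_mem E t' (deriv T1 e) (deriv T2 e)) \/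
       (~ inE E e /\ (par_mem E t' (deriv T1 e) T2 \/ par_mem E t' T1 (deriv T2 e))))
  end.
Definition parT (E : eset) (T1 T2 : tset) : tset := fun t => par_mem E t T1 T2.

(* trace semantics; recursion on a size bound (substitution preserves size) *)
Fixpoint tsize (P : term) : nat :=
  match P with
  | STOP | FAIL => 1
  | Pre _ _ P => S (tsize P)
  | Ext P Q => S (tsize P + tsize Q)
  | Par _ P Q => S (tsize P + tsize Q)
  end.

Fixpoint semn (n : nat) (P : term) : tset :=
  match n with
  | 0 => fun _ => False
  | S n =>
    match P with
    | STOP => fun t => t = []
    | FAIL => fun _ => False
    | Pre x E P => fun t => t = [] \/
        exists e s, t = e :: s /\ inE E e /\ semn n (subst e x P) s
    | Ext P Q => fun t => semn n P t \/ semn n Q t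
    | Par E P Q => parT E (semn n P) (semn n Q)
    end
  end.
Definition sem (P : term) : tset := semn (tsize P) P.

Definition action := option Sigma.   (* None = tau *)

Definition notinE (E : eset) (a : action) : Prop :=
  match a with None => True | Some e => ~ inE E e end.

Inductive doomed : term -> Prop :=
| D_FAIL : doomed FAIL
| D_Ext D1 D2 : doomed D1 -> doomed D2 -> doomed (Ext D1 D2)
| D_ParL E D P : doomed D -> doomed (Par E D P)
| D_ParR E P D : doomed D -> doomed (Par E P D).

Definition viable (P : term) : Prop := ~ doomed P.

Inductive step : term -> action -> term -> Prop :=
| s1 x E P e : inE E e -> step (Pre x E P) (Some e) (subst e x P)
| s2 P P' Q : step P None P' -> step (Ext P Q) None (Ext P' Q)
| s3 P Q Q' : step Q None Q' -> step (Ext P Q) None (Ext P Q')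
| s4 P P' Q e : step P (Some e) P' -> step (Ext P Q) (Some e) P'
| s5 P Q Q' e : step Q (Some e) Q' -> step (Ext P Q) (Some e) Q'
| s6 E P P' Q a : step P a P' -> notinE E a -> viable Q ->
    step (Par E P Q) a (Par E P' Q)
| s7 E P Q Q' a : step Q a Q' -> notinE E a -> viable P ->
    step (Par E P Q) a (Par E P Q')
| s8 E P Q P' Q' e : viable P -> viable Q -> step P (Some e) P' ->
    step Q (Some e) Q' -> inE E e -> step (Par E P Q) (Some e) (Par E P' Q')
| s9 E D1 D2 P1 : doomed D1 -> doomed D2 -> step D1 None P1 ->
    step (Par E D1 D2) None (Par E P1 D2)
| s10 E D1 D2 P2 : doomed D1 -> doomed D2 -> step D2 None P2 ->
    step (Par E D1 D2) None (Par E D1 P2)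
| s11 : step (Ext FAIL FAIL) None FAIL
| s12 E P : step (Par E FAIL P) None FAIL
| s13 E P : step (Par E P FAIL) None FAIL.

Inductive steps : term -> list action -> term -> Prop :=
| steps_nil P : steps P [] P
| steps_cons P a P1 l Q : step P a P1 -> steps P1 l Q -> steps P (a :: l) Q.

(* visible transition P =s=> Q : deleting the taus from the labels gives s *)
Definition wstep (P : term) (s : list Sigma) (Q : term) : Prop :=
  exists l, steps P l Q /\ flat_map (fun a : action => match a with Some e => [e] | None => [] end) l = s.

End Calculus.

From Stdlib Require Import List Lia.
Import ListNotations.

(** Soundness: every transition [P -a-> P'] satisfies [a [[P']] ⊆ [[P]]], and
    doomed terms denote the empty trace set, so the viability side conditions
    of rules 6-8 hold automatically along any run that ends in a term with a
    nonempty semantics.  Completeness is by induction on [P]; the only real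
    case is [P ||_E Q].  By the defining equation of [||_E], a trace of
    [([[P]] ||_E [[Q]])(e)] comes from a synchronised move or from a move of
    one side.  By induction [[[P]](e)] is the union of the [[[P']]] over the
    weak [e]-successors [P'] of [P], and [||_E] distributes over unions trace
    by trace, so a single pair of successors [P'], [Q'] accounts for the trace. *)

Section WeakSteps.
Local Set Implicit Arguments.
Local Unset Strict Implicit.
Variable Sigma : Type.
Implicit Types (P Q R : term Sigma) (T : tset Sigma) (E : eset Sigma)
  (e : Sigma) (s t : list Sigma).

Lemma nonempty_mono T T' : (forall s, T s -> T' s) -> nonempty T -> nonempty T'.
Proof. intros H [s Hs]. exists s. auto. Qed.

Lemma nonempty_deriv T e : nonempty (deriv T e) -> nonempty T.
Proof. intros [s Hs]. exists (e :: s). exact Hs. Qed.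

Lemma par_mem_nonempty E t T1 T2 :
  par_mem E t T1 T2 -> nonempty T1 /\ nonempty T2.
Proof. destruct t; simpl; tauto. Qed.

Lemma par_mem_mono E t : forall T1 T2 T1' T2',
  (forall s, T1 s -> T1' s) -> (forall s, T2 s -> T2' s) ->
  par_mem E t T1 T2 -> par_mem E t T1' T2'.
Proof.
  induction t as [|a t IH]; intros T1 T2 T1' T2' H1 H2; simpl.
  - intros (N1 & N2 & Hi). split; [|split]; eauto using nonempty_mono.
  - intros (N1 & N2 & Hd). split; [|split]; [eauto using nonempty_mono ..|].
    destruct Hd as [[Hin Hp]|[Hn [Hp|Hp]]].
    + left. split; [exact Hin|]. revert Hp.
      apply IH; intro s; [apply H1|apply H2].
    + right. split; [exact Hn|left]. revert Hp.
      apply IH; [intro s; apply H1|exact H2].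
    + right. split; [exact Hn|right]. revert Hp.
      apply IH; [exact H1|intro s; apply H2].
Qed.

Lemma par_mem_ext E t T1 T2 T1' T2' :
  (forall s, T1 s <-> T1' s) -> (forall s, T2 s <-> T2' s) ->
  (par_mem E t T1 T2 <-> par_mem E t T1' T2').
Proof. intros H1 H2. split; apply par_mem_mono; firstorder. Qed.

Lemma par_mem_comm E t : forall T1 T2, par_mem E t T1 T2 -> par_mem E t T2 T1.
Proof.
  induction t as [|a t IH]; intros T1 T2; simpl; [tauto|].
  intros (N1 & N2 & [[Hin Hp]|[Hn [Hp|Hp]]]);
    (split; [exact N2|split; [exact N1|]]).
  - left. auto.
  - right. split; [exact Hn|right]. auto.
  - right. split; [exact Hn|left]. auto.
Qed.

Lemma par_mem_exists_l E t : forall (I : Type) (A : I -> tset Sigma) T2,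
  par_mem E t (fun s => exists i, A i s) T2 -> exists i, par_mem E t (A i) T2.
Proof.
  induction t as [|a t IH]; intros I A T2; simpl.
  - intros ([s [i Hs]] & N2 & Hi). exists i. split; [exists s; exact Hs|auto].
  - intros (_ & N2 & [[Hin Hp]|[Hn [Hp|Hp]]]).
    + destruct (IH I (fun i => deriv (A i) a) _ Hp) as [i Hi].
      exists i. split; [exact (nonempty_deriv (proj1 (par_mem_nonempty Hi)))|].
      split; [exact N2|left; auto].
    + destruct (IH I (fun i => deriv (A i) a) _ Hp) as [i Hi].
      exists i. split; [exact (nonempty_deriv (proj1 (par_mem_nonempty Hi)))|].
      split; [exact N2|right; auto].
    + destruct (IH I A _ Hp) as [i Hi].
      exists i. split; [exact (proj1 (par_mem_nonempty Hi))|].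
      split; [exact N2|right; auto].
Qed.

Lemma par_mem_exists_r E t (J : Type) (B : J -> tset Sigma) T1 :
  par_mem E t T1 (fun s => exists j, B j s) -> exists j, par_mem E t T1 (B j).
Proof.
  intros H. destruct (par_mem_exists_l (par_mem_comm H)) as [j Hj].
  exists j. exact (par_mem_comm Hj).
Qed.

Lemma par_mem_cons_l E e t T1 T1' T2 : ~ inE E e ->
  (forall s, T1' s -> T1 (e :: s)) -> par_mem E t T1' T2 -> par_mem E (e :: t) T1 T2.
Proof.
  intros Hn H1 Hp. destruct (par_mem_nonempty Hp) as [[s Hs] N2].
  split; [exists (e :: s); auto|split; [exact N2|]].
  right. split; [exact Hn|left]. revert Hp. apply par_mem_mono; auto.
Qed.

Lemma par_mem_cons_r E e t T1 T2 T2' : ~ inE E e ->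
  (forall s, T2' s -> T2 (e :: s)) -> par_mem E t T1 T2' -> par_mem E (e :: t) T1 T2.
Proof.
  intros Hn H2 Hp. apply par_mem_comm, par_mem_cons_l with T2'; auto using par_mem_comm.
Qed.

Lemma par_mem_cons_sync E e t T1 T1' T2 T2' : inE E e ->
  (forall s, T1' s -> T1 (e :: s)) -> (forall s, T2' s -> T2 (e :: s)) ->
  par_mem E t T1' T2' -> par_mem E (e :: t) T1 T2.
Proof.
  intros He H1 H2 Hp. destruct (par_mem_nonempty Hp) as [[s1 Hs1] [s2 Hs2]].
  split; [exists (e :: s1); auto|split; [exists (e :: s2); auto|]].
  left. split; [exact He|]. revert Hp. apply par_mem_mono; auto.
Qed.

Lemma tsize_subst e x P : tsize (subst e x P) = tsize P.
Proof. induction P; simpl; auto. destruct (Nat.eqb x x0); simpl; auto. Qed.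

Lemma semn_fuel_irrelevant n : forall m P, tsize P <= n -> tsize P <= m ->
  forall t, semn n P t <-> semn m P t.
Proof.
  induction n as [|n IH]; intros [|m] P Hn Hm t; try (destruct P; simpl in *; lia).
  destruct P as [| |x E P|P Q|E P Q]; simpl in Hn, Hm |- *; try tauto.
  - assert (IHs : forall e s, semn n (subst e x P) s <-> semn m (subst e x P) s)
      by (intros; apply IH; rewrite tsize_subst; lia).
    split; intros [H|(e & s & Ht & He & Hs)]; auto;
      right; exists e, s; repeat split; auto; apply IHs; exact Hs.
  - pose proof (IH m P ltac:(lia) ltac:(lia) t).
    pose proof (IH m Q ltac:(lia) ltac:(lia) t). tauto.
  - apply par_mem_ext; intro s; apply IH; lia.
Qed.

Lemma semn_sem n P t : tsize P <= n -> semn n P t <-> sem P t.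
Proof. intros Hn. apply semn_fuel_irrelevant; auto. Qed.

Lemma sem_Pre x E P t : sem (Pre x E P) t <->
  t = [] \/ exists e s, t = e :: s /\ inE E e /\ sem (subst e x P) s.
Proof.
  assert (Hsub : forall e s, semn (tsize P) (subst e x P) s <-> sem (subst e x P) s)
    by (intros; apply semn_sem; rewrite tsize_subst; lia).
  unfold sem at 1; simpl.
  split; intros [H|(e & s & Ht & He & Hs)]; auto;
    right; exists e, s; repeat split; auto; apply Hsub; exact Hs.
Qed.

Lemma sem_Ext P Q t : sem (Ext P Q) t <-> sem P t \/ sem Q t.
Proof.
  unfold sem at 1; simpl.
  rewrite (semn_sem (n := tsize P + tsize Q) (P := P)),
    (semn_sem (n := tsize P + tsize Q) (P := Q)) by lia.
  tauto.
Qed.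

Lemma sem_Par E P Q t : sem (Par E P Q) t <-> par_mem E t (sem P) (sem Q).
Proof.
  unfold sem at 1; simpl. unfold parT.
  apply par_mem_ext; intro s; apply semn_sem; lia.
Qed.

Lemma sem_doomed P : doomed P -> forall t, ~ sem P t.
Proof.
  induction 1 as [|D1 D2 _ IH1 _ IH2|E D P _ IH|E P D _ IH]; intros t Ht.
  - exact Ht.
  - apply sem_Ext in Ht as [Ht|Ht]; [exact (IH1 _ Ht)|exact (IH2 _ Ht)].
  - apply sem_Par, par_mem_nonempty in Ht as [[s Hs] _]. exact (IH _ Hs).
  - apply sem_Par, par_mem_nonempty in Ht as [_ [s Hs]]. exact (IH _ Hs).
Qed.

Lemma viable_of_sem P t : sem P t -> viable P.
Proof. intros Ht HD. exact (sem_doomed HD Ht). Qed.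

Lemma viable_of_nonempty P : nonempty (sem P) -> viable P.
Proof. intros [t Ht]. exact (viable_of_sem Ht). Qed.

Definition visible (a : action Sigma) : list Sigma :=
  match a with Some e => [e] | None => [] end.

Lemma step_sound P a P' : step P a P' -> forall t, sem P' t -> sem P (visible a ++ t).
Proof.
  induction 1 as
    [x E P e He
    | P P' Q _ IH | P Q Q' _ IH | P P' Q e _ IH | P Q Q' e _ IH
    | E P P' Q [e|] _ IH Ha _ | E P Q Q' [e|] _ IH Ha _
    | E P Q P' Q' e _ _ _ IHP _ IHQ He
    | E D1 D2 P1 _ HD2 _ _ | E D1 D2 P2 HD1 _ _ _
    | | E P | E P]; intros t Ht.
  - apply sem_Pre. right. exists e, t. auto.
  - apply sem_Ext in Ht as [Ht|Ht]; apply sem_Ext; [left; exact (IH _ Ht)|auto].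
  - apply sem_Ext in Ht as [Ht|Ht]; apply sem_Ext; [auto|right; exact (IH _ Ht)].
  - apply sem_Ext. left. exact (IH _ Ht).
  - apply sem_Ext. right. exact (IH _ Ht).
  - apply sem_Par in Ht. apply sem_Par. exact (par_mem_cons_l Ha IH Ht).
  - apply sem_Par in Ht. apply sem_Par. revert Ht. apply par_mem_mono; [exact IH|auto].
  - apply sem_Par in Ht. apply sem_Par. exact (par_mem_cons_r Ha IH Ht).
  - apply sem_Par in Ht. apply sem_Par. revert Ht. apply par_mem_mono; [auto|exact IH].
  - apply sem_Par in Ht. apply sem_Par. exact (par_mem_cons_sync He IHP IHQ Ht).
  - apply sem_Par, par_mem_nonempty in Ht as [_ [s Hs]]. destruct (sem_doomed HD2 Hs).
  - apply sem_Par, par_mem_nonempty in Ht as [[s Hs] _]. destruct (sem_doomed HD1 Hs).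
  - destruct Ht.
  - destruct Ht.
  - destruct Ht.
Qed.

Inductive tau_star : term Sigma -> term Sigma -> Prop :=
| tau_refl P : tau_star P P
| tau_cons P P1 Q : step P None P1 -> tau_star P1 Q -> tau_star P Q.

Definition weak_step P e Q : Prop :=
  exists P1 P2, tau_star P P1 /\ step P1 (Some e) P2 /\ tau_star P2 Q.

Lemma tau_star_trans P Q R : tau_star P Q -> tau_star Q R -> tau_star P R.
Proof. induction 1; intros; [auto|econstructor; eauto]. Qed.

Lemma tau_star_sound P Q : tau_star P Q -> forall t, sem Q t -> sem P t.
Proof.
  induction 1 as [|P P1 Q H _ IH]; intros t Ht; [auto|exact (step_sound H (IH _ Ht))].
Qed.

Lemma weak_step_sound P e Q t : weak_step P e Q -> sem Q t -> sem P (e :: t).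
Proof.
  intros (P1 & P2 & H1 & H2 & H3) Ht.
  exact (tau_star_sound H1 (step_sound H2 (tau_star_sound H3 Ht))).
Qed.

Lemma weak_step_of_step P e Q : step P (Some e) Q -> weak_step P e Q.
Proof. intros H. exists P, Q. repeat split; auto using tau_refl. Qed.

Lemma weak_step_tau_l P P1 e Q : step P None P1 -> weak_step P1 e Q -> weak_step P e Q.
Proof.
  intros H (P2 & P3 & H1 & H2 & H3). exists P2, P3.
  repeat split; eauto using tau_cons.
Qed.

Lemma tau_star_ExtL P P1 Q : tau_star P P1 -> tau_star (Ext P Q) (Ext P1 Q).
Proof. induction 1; econstructor; eauto using s2. Qed.

Lemma tau_star_ExtR P Q Q1 : tau_star Q Q1 -> tau_star (Ext P Q) (Ext P Q1).
Proof. induction 1; econstructor; eauto using s3. Qed.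

Lemma tau_star_ParL E P P1 Q :
  viable Q -> tau_star P P1 -> tau_star (Par E P Q) (Par E P1 Q).
Proof. induction 2; econstructor; eauto. apply s6; simpl; auto. Qed.

Lemma tau_star_ParR E P Q Q1 :
  viable P -> tau_star Q Q1 -> tau_star (Par E P Q) (Par E P Q1).
Proof. induction 2; econstructor; eauto. apply s7; simpl; auto. Qed.

Lemma weak_step_ExtL P e P' Q : weak_step P e P' -> weak_step (Ext P Q) e P'.
Proof.
  intros (P1 & P2 & H1 & H2 & H3). exists (Ext P1 Q), P2.
  repeat split; auto using tau_star_ExtL, s4.
Qed.

Lemma weak_step_ExtR P e Q Q' : weak_step Q e Q' -> weak_step (Ext P Q) e Q'.
Proof.
  intros (Q1 & Q2 & H1 & H2 & H3). exists (Ext P Q1), Q2.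
  repeat split; auto using tau_star_ExtR, s5.
Qed.

Lemma weak_step_ParL E P e P' Q :
  ~ inE E e -> viable Q -> weak_step P e P' -> weak_step (Par E P Q) e (Par E P' Q).
Proof.
  intros Hn HQ (P1 & P2 & H1 & H2 & H3). exists (Par E P1 Q), (Par E P2 Q).
  repeat split; auto using tau_star_ParL, s6.
Qed.

Lemma weak_step_ParR E P e Q Q' :
  ~ inE E e -> viable P -> weak_step Q e Q' -> weak_step (Par E P Q) e (Par E P Q').
Proof.
  intros Hn HP (Q1 & Q2 & H1 & H2 & H3). exists (Par E P Q1), (Par E P Q2).
  repeat split; auto using tau_star_ParR, s7.
Qed.

Lemma weak_step_sync E P e P' Q Q' : inE E e ->
  nonempty (sem P') -> nonempty (sem Q') ->
  weak_step P e P' -> weak_step Q e Q' -> weak_step (Par E P Q) e (Par E P' Q').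
Proof.
  intros He [s HP'] [s' HQ'] (P1 & P2 & H1 & H2 & H3) (Q1 & Q2 & K1 & K2 & K3).
  assert (HP2 := tau_star_sound H3 HP'). assert (HQ2 := tau_star_sound K3 HQ').
  assert (HP1 := step_sound H2 HP2). assert (HQ1 := step_sound K2 HQ2).
  assert (HQ := tau_star_sound K1 HQ1).
  exists (Par E P1 Q1), (Par E P2 Q2). split; [|split].
  - apply tau_star_trans with (Par E P1 Q);
      [apply tau_star_ParL|apply tau_star_ParR]; eauto using viable_of_sem.
  - apply s8; eauto using viable_of_sem.
  - apply tau_star_trans with (Par E P' Q2);
      [apply tau_star_ParL|apply tau_star_ParR]; eauto using viable_of_sem.
Qed.

Definition after P e : tset Sigma := fun t => exists Q, weak_step P e Q /\ sem Q t.

Lemma after_Par E P Q e :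
  (forall t, sem P (e :: t) -> after P e t) ->
  (forall t, sem Q (e :: t) -> after Q e t) ->
  forall t, sem (Par E P Q) (e :: t) -> after (Par E P Q) e t.
Proof.
  intros IHP IHQ t Ht.
  apply sem_Par in Ht as (NP & NQ & [[He Hp]|[Hn [Hp|Hp]]]).
  - assert (Hp' : par_mem E t (after P e) (after Q e))
      by (revert Hp; apply par_mem_mono; [exact IHP|exact IHQ]).
    destruct (par_mem_exists_l (A := fun P' s => weak_step P e P' /\ sem P' s) Hp')
      as [P' HP'].
    destruct (par_mem_exists_r (B := fun Q' s => weak_step Q e Q' /\ sem Q' s) HP')
      as [Q' HPQ].
    destruct (par_mem_nonempty HPQ) as [[s1 [HwP Hs1]] [s2 [HwQ Hs2]]].
    exists (Par E P' Q'). split.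
    + apply weak_step_sync; auto; [exists s1|exists s2]; auto.
    + apply sem_Par. revert HPQ. apply par_mem_mono; intros s [_ Hs]; exact Hs.
  - assert (Hp' : par_mem E t (after P e) (sem Q))
      by (revert Hp; apply par_mem_mono; [exact IHP|auto]).
    destruct (par_mem_exists_l (A := fun P' s => weak_step P e P' /\ sem P' s) Hp')
      as [P' HP'].
    destruct (par_mem_nonempty HP') as [[s1 [HwP _]] _].
    exists (Par E P' Q). split.
    + apply weak_step_ParL; auto using viable_of_nonempty.
    + apply sem_Par. revert HP'. apply par_mem_mono; [intros s [_ Hs]; exact Hs|auto].
  - assert (Hp' : par_mem E t (sem P) (after Q e))
      by (revert Hp; apply par_mem_mono; [auto|exact IHQ]).
    destruct (par_mem_exists_r (B := fun Q' s => weak_step Q e Q' /\ sem Q' s) Hp')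
      as [Q' HQ'].
    destruct (par_mem_nonempty HQ') as [_ [s2 [HwQ _]]].
    exists (Par E P Q'). split.
    + apply weak_step_ParR; auto using viable_of_nonempty.
    + apply sem_Par. revert HQ'. apply par_mem_mono; [auto|intros s [_ Hs]; exact Hs].
Qed.

Lemma sem_cons_after P e : forall t, sem P (e :: t) -> after P e t.
Proof.
  induction P as [| |x E P _|P IHP Q IHQ|E P IHP Q IHQ]; intros t Ht.
  - discriminate Ht.
  - destruct Ht.
  - apply sem_Pre in Ht as [Ht|(e' & s & Ht & He & Hs)]; [discriminate Ht|].
    injection Ht as <- <-.
    exists (subst e x P). split; [apply weak_step_of_step; constructor|]; assumption.
  - apply sem_Ext in Ht as [Ht|Ht].
    + destruct (IHP _ Ht) as (P' & Hw & Hs). exists P'. auto using weak_step_ExtL.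
    + destruct (IHQ _ Ht) as (Q' & Hw & Hs). exists Q'. auto using weak_step_ExtR.
  - exact (after_Par IHP IHQ Ht).
Qed.

Lemma steps_app P l1 R l2 Q : steps P l1 R -> steps R l2 Q -> steps P (l1 ++ l2) Q.
Proof. induction 1; intros; simpl; [auto|econstructor; eauto]. Qed.

Lemma tau_star_steps P Q : tau_star P Q -> exists l, steps P l Q /\ flat_map visible l = [].
Proof.
  induction 1 as [P|P P1 Q H _ (l & Hl & Hv)].
  - exists []. split; [constructor|reflexivity].
  - exists (None :: l). split; [econstructor; eauto|exact Hv].
Qed.

Lemma steps_tau_star P l Q : steps P l Q -> flat_map visible l = [] -> tau_star P Q.
Proof.
  induction 1 as [|P [e|] P1 l Q H _ IH]; intros Hv; [constructor|discriminate Hv|].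
  exact (tau_cons H (IH Hv)).
Qed.

Lemma steps_weak_step P l Q e : steps P l Q -> flat_map visible l = [e] -> weak_step P e Q.
Proof.
  induction 1 as [|P [e'|] P1 l Q H Hl IH]; intros Hv; [discriminate Hv| |].
  - injection Hv as <- Hv. exists P, P1. split; [constructor|].
    split; [exact H|exact (steps_tau_star Hl Hv)].
  - exact (weak_step_tau_l H (IH Hv)).
Qed.

Lemma wstep_single P e Q : wstep P [e] Q <-> weak_step P e Q.
Proof.
  split.
  - intros (l & Hl & Hv). exact (steps_weak_step Hl Hv).
  - intros (P1 & P2 & H1 & H2 & H3).
    destruct (tau_star_steps H1) as (l1 & Hl1 & Hv1).
    destruct (tau_star_steps H3) as (l2 & Hl2 & Hv2).
    exists (l1 ++ Some e :: l2). split.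
    + apply steps_app with P1; [exact Hl1|econstructor; eauto].
    + change (flat_map visible (l1 ++ Some e :: l2) = [e]).
      rewrite flat_map_app. simpl. rewrite Hv1, Hv2. reflexivity.
Qed.

End WeakSteps.

Theorem lemma2 (Sigma : Type) (P : term Sigma) (e : Sigma) :
  closed P ->
  forall t : list Sigma,
    sem P (e :: t) <-> exists Q : term Sigma, wstep P [e] Q /\ sem Q t.
Proof.
  intros _ t. split.
  - intros Ht. destruct (sem_cons_after Ht) as (Q & Hw & HQ).
    exists Q. split; [apply wstep_single|]; assumption.
  - intros (Q & Hw & HQ). apply wstep_single in Hw. exact (weak_step_sound Hw HQ).
Qed.
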